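(* Let $B$ be an $n\times n$ skew-symmetrizable matrix, $\mathbf d=(d_1,\dots,d_n)$ positive integers, $D=\mathrm{diag}(d_1,\dots,d_n)$. For every vertex $t$ of $\mathbb T_n$, the $C$-matrix $C^t$ of the $(\mathbf d,\mathbf z)$-cluster pattern with principal coefficients and initial seed $(\mathbf x,\mathbf y,B)$ equals the $C$-matrix at $t$ of the ordinary cluster pattern with principal coefficients and initial seed $(\mathbf x,\mathbf y,DB)$ (same initial vertex $t_0$).
   Context: $[a]_+=\max(a,0)$; all matrices are integer; $DB$ is again skew-symmetrizable. Mutation data: positive integers $\mathbf d$ and frozen coefficients $z_{i,s}$ ($1\le s\le d_i-1$) with $z_{i,s}=z_{i,d_i-s}$, $z_{i,0}=z_{i,d_i}=1$. For formal variables $\mathbf y,\mathbf z$, $\mathrm{Trop}(\mathbf y,\mathbf z)$ is the free abelian multiplicative group they generate with $\oplus$ the componentwise minimum of exponents. The $(\mathbf d,\mathbf z)$-mutation at $k$ acts on a skew-symmetrizable $B=(b_{ij})$ and $y$-variables by: $b'_{ij}=-b_{ij}$ if $i=k$ or $j=k$, else $b'_{ij}=b_{ij}+d_k([-b_{ik}]_+b_{kj}+b_{ik}[b_{kj}]_+)$; $y'_k=y_k^{-1}$, $y'_i=y_i(y_k^{[\varepsilon b_{ki}]_+})^{d_k}(\bigoplus_{s=0}^{d_k}z_{k,s}y_k^{\varepsilon s})^{-b_{ki}}$ ($i\ne k$), $\varepsilon=\pm1$. $\mathbb T_n$ is the $n$-regular tree with edges labeled $1,\dots,n$, distinct labels at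 each vertex. A $(\mathbf d,\mathbf z)$-cluster pattern with principal coefficients assigns seeds in $\mathrm{Trop}(\mathbf y,\mathbf z)$ to vertices, related by mutation at $k$ along edges labeled $k$, with initial seed $(\mathbf x,\mathbf y,B)$ at a fixed vertex $t_0$ whose $y$-variables are the generators $y_i$. Each $y$-variable $y^t_j$ is a Laurent monomial $\prod_iy_i^{c^t_{ij}}$ in $\mathbf y$ alone; $C^t=(c^t_{ij})$ is the $C$-matrix. The ordinary (Fomin–Zelevinsky) cluster pattern with principal coefficients is the special case $\mathbf d=(1,\dots,1)$ (no $\mathbf z$), with $C$-matrices defined the same way. *)

From HB Require Import structures.
From mathcomp Require Import all_boot all_order all_algebra.
Set Implicit Arguments. Unset Strict Implicit. Unset Printing Implicit Defensive.
Import Order.TTheory GRing.Theory Num.Theory.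
Local Open Scope ring_scope.

Definition pos (a : int) : int := Num.max a 0.

Definition skew_symmetrizable (n : nat) (B : 'M[int]_n) : Prop :=
  exists s : 'I_n -> nat, (forall i, (0 < s i)%N) /\
    forall i j, (s i)%:Z * B i j = - ((s j)%:Z * B j i).

(* An element is a Laurent monomial, given by its exponents: [ey i] is the
   exponent of y_i, and [ez i s] is the exponent of the free generator
   z_{i,s}, where s is taken in canonical form 1 <= s <= d_i/2
   (the identification z_{i,s} = z_{i,d_i-s} is built in, see [zgen]). *)
Record tropYZ (n : nat) := TYZ { ey : 'I_n -> int ; ez : 'I_n -> nat -> int }.

Definition tone n : tropYZ n := TYZ (fun _ => 0) (fun _ _ => 0).
Definition tmul n (a b : tropYZ n) : tropYZ n :=
  TYZ (fun i => ey a i + ey b i) (fun i s => ez a i s + ez b i s).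
Definition tpow n (a : tropYZ n) (m : int) : tropYZ n :=
  TYZ (fun i => ey a i * m) (fun i s => ez a i s * m).
Definition tinv n (a : tropYZ n) : tropYZ n := tpow a (-1).
Definition toplus n (a b : tropYZ n) : tropYZ n :=
  TYZ (fun i => Num.min (ey a i) (ey b i)) (fun i s => Num.min (ez a i s) (ez b i s)).

Definition ygen n (i : 'I_n) : tropYZ n :=
  TYZ (fun j => if j == i then 1 else 0) (fun _ _ => 0).

(* z_{i,s}, with z_{i,0} = z_{i,d_i} = 1 and z_{i,s} = z_{i,d_i - s} *)
Definition zgen n (d : 'I_n -> nat) (i : 'I_n) (s : nat) : tropYZ n :=
  if (s == 0%N) || (d i <= s)%N then tone n
  else TYZ (fun _ => 0)
           (fun j t => if (j == i) && (t == minn s (d i - s))%N then 1 else 0).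

(* \bigoplus_{s=0}^{d_k} z_{k,s} y_k^{s}   (epsilon = +1) *)
Definition zpoly n (d : 'I_n -> nat) (k : 'I_n) (yk : tropYZ n) : tropYZ n :=
  foldl (fun acc s => toplus acc (tmul (zgen d k s) (tpow yk s%:Z)))
        (tmul (zgen d k 0) (tpow yk 0)) (iota 1 (d k)).

Definition mutB n (d : 'I_n -> nat) (k : 'I_n) (B : 'M[int]_n) : 'M[int]_n :=
  \matrix_(i, j) if (i == k) || (j == k) then - B i j
                 else B i j + (d k)%:Z * (pos (- B i k) * B k j + B i k * pos (B k j)).

Definition mutY n (d : 'I_n -> nat) (k : 'I_n) (B : 'M[int]_n)
    (y : 'I_n -> tropYZ n) : 'I_n -> tropYZ n :=
  fun i => if i == k then tinv (y k)
           else tmul (y i) (tmul (tpow (y k) (pos (B k i) * (d k)%:Z))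
                                 (tpow (zpoly d k (y k)) (- B k i))).

(* a Y-seed (the x-variables do not influence B and y) *)
Definition dzseed n := ('M[int]_n * ('I_n -> tropYZ n))%type.

Definition dzmut n (d : 'I_n -> nat) (S : dzseed n) (k : 'I_n) : dzseed n :=
  (mutB d k S.1, mutY d k S.1 S.2).

(* seed at the vertex of T_n reached from t0 by the path with labels w *)
Definition dzseed_at n (d : 'I_n -> nat) (B : 'M[int]_n) (w : seq 'I_n) : dzseed n :=
  foldl (dzmut d) (B, @ygen n) w.

Definition dzC n (d : 'I_n -> nat) (B : 'M[int]_n) (w : seq 'I_n) : 'M[int]_n :=
  \matrix_(i, j) ey ((dzseed_at d B w).2 j) i.

(* elements of Trop(y): exponent vectors *)
Definition tropY n := ('I_n -> int).

Definition ordmutB n (k : 'I_n) (B : 'M[int]_n) : 'M[int]_n :=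
  \matrix_(i, j) if (i == k) || (j == k) then - B i j
                 else B i j + (pos (- B i k) * B k j + B i k * pos (B k j)).

(* y'_k = y_k^{-1},  y'_i = y_i y_k^{[b_ki]_+} (1 (+) y_k)^{-b_ki} *)
Definition ordmutY n (k : 'I_n) (B : 'M[int]_n) (y : 'I_n -> tropY n) : 'I_n -> tropY n :=
  fun i => if i == k then (fun l => - y k l)
           else (fun l => y i l + pos (B k i) * y k l
                          + Num.min 0 (y k l) * (- B k i)).

Definition ordseed n := ('M[int]_n * ('I_n -> tropY n))%type.

Definition ordmut n (S : ordseed n) (k : 'I_n) : ordseed n :=
  (ordmutB k S.1, ordmutY k S.1 S.2).

Definition ordseed_at n (B : 'M[int]_n) (w : seq 'I_n) : ordseed n :=
  foldl (@ordmut n) (B, fun j l => if l == j then 1 else 0) w.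

Definition ordC n (B : 'M[int]_n) (w : seq 'I_n) : 'M[int]_n :=
  \matrix_(i, j) ((ordseed_at B w).2 j i).

Definition diagmul n (d : 'I_n -> nat) (B : 'M[int]_n) : 'M[int]_n :=
  \matrix_(i, j) ((d i)%:Z * B i j).

(* vertices of T_n <-> reduced label words from t0 (no two consecutive equal) *)
Definition reduced_word n (w : seq 'I_n) : bool := sorted (fun a b : 'I_n => a != b) w.

(* Only the y-exponents enter the C-matrix.  Tropically, the y_k-exponent of
   \bigoplus_{s=0}^{d_k} z_{k,s} y_k^s is d_k min(0, c) when c is that of y_k,
   since the z_{k,s} carry no y-exponent; so on y-exponents the
   (d,z)-mutation of (B, y) is the ordinary mutation of (DB, y), and
   D mu_k(B) = mu_k(DB) keeps the two exchange matrices in step. *)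
From mathcomp Require Import all_boot all_order all_algebra.
From mathcomp Require Import zify ring.
Import Order.TTheory GRing.Theory Num.Theory.
Local Open Scope ring_scope.

Lemma pos_pmull (a x : int) : 0 <= a -> pos (a * x) = a * pos x.
Proof. by rewrite /pos => a_ge0; lia. Qed.

Lemma ey_zgen n (d : 'I_n -> nat) k s l : ey (zgen d k s) l = 0.
Proof. by rewrite /zgen; case: ifP. Qed.

Lemma ey_zpoly n (d : 'I_n -> nat) k (yk : tropYZ n) l :
  ey (zpoly d k yk) l = (d k)%:Z * Num.min 0 (ey yk l).
Proof.
rewrite /zpoly; elim: (d k) => [|m IHm]; first by rewrite /=; lia.
rewrite -[m.+1]addn1 iotaD foldl_cat add1n /= IHm ey_zgen add0r; lia.
Qed.

Lemma diagmul_mutB n (d : 'I_n -> nat) k (B : 'M[int]_n) :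
  diagmul d (mutB d k B) = ordmutB k (diagmul d B).
Proof.
apply/matrixP => i j; rewrite !mxE; case: ifP => _; first by rewrite mulrN.
by rewrite -mulrN !pos_pmull //; ring.
Qed.

Definition seed_proj {n} (d : 'I_n -> nat) (S : dzseed n) (T : ordseed n) : Prop :=
  T.1 = diagmul d S.1 /\ forall j l, ey (S.2 j) l = T.2 j l.

Lemma seed_proj_mut n (d : 'I_n -> nat) (S : dzseed n) (T : ordseed n) k :
  seed_proj d S T -> seed_proj d (dzmut d S k) (ordmut T k).
Proof.
case=> T1E eyST; split=> [|j l]; first by rewrite /= T1E diagmul_mutB.
rewrite /= /mutY /ordmutY; case: ifP => _ /=; first by rewrite eyST; ring.
by rewrite ey_zpoly !eyST T1E !mxE pos_pmull //; ring.
Qed.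

Lemma seed_proj_foldl n (d : 'I_n -> nat) (S : dzseed n) (T : ordseed n)
    (w : seq 'I_n) :
  seed_proj d S T -> seed_proj d (foldl (dzmut d) S w) (foldl (@ordmut n) T w).
Proof. by elim: w S T => [|k w IHw] S T //= ST; apply/IHw/seed_proj_mut. Qed.

Theorem mainTheorem7 (n : nat) (B : 'M[int]_n) (d : 'I_n -> nat) :
  skew_symmetrizable B ->
  (forall i, (0 < d i)%N) ->
  forall w : seq 'I_n, reduced_word w ->
    dzC d B w = ordC (diagmul d B) w.
Proof.
move=> _ _ w _.
have [_ eyC] : seed_proj d (dzseed_at d B w) (ordseed_at (diagmul d B) w).
  exact: seed_proj_foldl.
by apply/matrixP => i j; rewrite !mxE eyC.
Qed.
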